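(* Let $\alpha>1$, let $X=\{x_j:j\in J\}\subset\mathbb{R}^2$ be finite, and let $s'\in\mathbb{R}^2$. Then $s'$ is the minimiser of $s\mapsto P_2(s,X(s'))$ if and only if $s'=s_\alpha^*$.
   Context: For $\beta>1$ and a finite indexed family $Y=(y_j)_{j\in J}$, $P_\beta(s,Y)=\sum_{j\in J}\|s-y_j\|^\beta+\max_{j\in J}\|s-y_j\|^\beta$; $s_\alpha^*$ is the unique minimiser of $P_\alpha(\cdot,X)$. For a point $s$, $x_j(s)=s+\|s-x_j\|^{\alpha-2}(x_j-s)$ (with $x_j(s)=s$ when $s=x_j$), so that $\|x_j(s)-s\|=\|x_j-s\|^{\alpha-1}$, and $X(s)=(x_j(s))_{j\in J}$. *)

(* points of R^2 are row vectors 'rV[R]_2 over a realType R,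
   with the Euclidean norm; real powers via powR (0 `^ b = 0 for b <> 0). *)
From HB Require Import structures.
From mathcomp Require Import all_boot all_order all_algebra.
From mathcomp Require Import all_classical all_reals all_analysis.
Set Implicit Arguments. Unset Strict Implicit. Unset Printing Implicit Defensive.
Import Order.TTheory GRing.Theory Num.Theory.
Local Open Scope ring_scope.

Definition enorm {R : realType} (v : 'rV[R]_2) : R :=
  Num.sqrt (\sum_(i < 2) v ord0 i ^+ 2).

Definition Pbeta {R : realType} {J : finType} (beta : R) (s : 'rV[R]_2)
    (y : J -> 'rV[R]_2) : R :=
  \sum_(j : J) powR (enorm (s - y j)) beta
  + \big[Num.max/0]_(j : J) powR (enorm (s - y j)) beta.

Definition Xs {R : realType} {J : finType} (alpha : R) (x : J -> 'rV[R]_2)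
    (s : 'rV[R]_2) : J -> 'rV[R]_2 :=
  fun j => if s == x j then s
           else s + powR (enorm (s - x j)) (alpha - 2) *: (x j - s).

(** The function [P_b(., Y)] is convex, so its minimisers are exactly its
    stationary points: [s] minimises it iff for every direction [d] some index
    [j] maximising [|s - y_j|] satisfies [sum_k g_k . d + g_j . d >= 0], where
    [g_k = |s - y_k|^(b-2) (s - y_k)] is [1/b] times the gradient of
    [|s - y_k|^b].  Sufficiency is the tangent inequality for [|.|^b];
    necessity is a first-order descent argument along [s + t d] as [t -> 0+].
    For [P_a(., X)] the term [g_j] is [s - x_j(s)] itself, which is also the
    term [g_j] of [P_2(., X(s))]; and [|s - x_j(s)| = |s - x_j|^(a-1)] orders
    the indices as [|s - x_j|] does.  Hence [s] is stationary for [P_a(., X)]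
    iff it is stationary for [P_2(., X(s))]. *)
From HB Require Import structures.
From mathcomp Require Import all_boot all_order all_algebra.
From mathcomp Require Import all_classical all_reals all_analysis.
From mathcomp Require Import ring lra.
Import Order.TTheory GRing.Theory Num.Theory.
Import numFieldNormedType.Exports.
Local Open Scope classical_set_scope.
Local Open Scope ring_scope.

Section EuclideanPlane.
Context {R : realType}.
Implicit Types (p q v d : 'rV[R]_2) (c : R).

Definition dot p q : R :=
  p ord0 ord0 * q ord0 ord0 + p ord0 ord_max * q ord0 ord_max.

Lemma dotC p q : dot p q = dot q p.
Proof. by rewrite /dot mulrC [p _ ord_max * _]mulrC. Qed.

Lemma dotDl p q d : dot (p + q) d = dot p d + dot q d.
Proof. by rewrite /dot !mxE; ring. Qed.

Lemma dotBr p q d : dot d (p - q) = dot d p - dot d q.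
Proof. by rewrite /dot !mxE; ring. Qed.

Lemma dotZl c p d : dot (c *: p) d = c * dot p d.
Proof. by rewrite /dot !mxE; ring. Qed.

Lemma dotZr c p d : dot d (c *: p) = c * dot d p.
Proof. by rewrite dotC dotZl dotC. Qed.

Lemma dotNr p d : dot d (- p) = - dot d p.
Proof. by rewrite -scaleN1r dotZr mulN1r. Qed.

Lemma dot0l d : dot 0 d = 0.
Proof. by rewrite /dot !mxE; ring. Qed.

Lemma dot_ge0 p : 0 <= dot p p.
Proof. by rewrite /dot addr_ge0 // -expr2 sqr_ge0. Qed.

Lemma enormE p : enorm p = Num.sqrt (dot p p).
Proof.
rewrite /enorm !big_ord_recl big_ord0 addr0 /dot !expr2.
by congr (Num.sqrt (_ + p _ _ * p _ _)); apply/val_inj.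
Qed.

Lemma enorm_ge0 p : 0 <= enorm p.
Proof. by rewrite enormE sqrtr_ge0. Qed.

Lemma sqr_enorm p : enorm p ^+ 2 = dot p p.
Proof. by rewrite enormE sqr_sqrtr // dot_ge0. Qed.

Lemma enormZ c p : enorm (c *: p) = `|c| * enorm p.
Proof.
rewrite !enormE dotZl dotZr mulrA -expr2 sqrtrM ?sqr_ge0 //.
by rewrite sqrtr_sqr.
Qed.

Lemma enorm_eq0 p : enorm p = 0 -> p = 0.
Proof.
move=> /eqP; rewrite enormE sqrtr_eq0 /dot => p0.
have p00 : p ord0 ord0 = 0 by apply/eqP; rewrite -sqrf_eq0 expr2; apply/eqP; nra.
have p01 : p ord0 ord_max = 0 by apply/eqP; rewrite -sqrf_eq0 expr2; apply/eqP; nra.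
apply/rowP => -[[|[|//]] i2]; rewrite mxE.
- by rewrite -p00; congr (p _ _); apply/val_inj.
- by rewrite -p01; congr (p _ _); apply/val_inj.
Qed.

Lemma dot_le_enorm p q : dot p q <= enorm p * enorm q.
Proof.
have [pq_le0|pq_gt0] := lerP (dot p q) 0.
  by apply: le_trans pq_le0 _; rewrite mulr_ge0 ?enorm_ge0.
rewrite !enormE -sqrtrM ?dot_ge0 // -(ger0_norm (ltW pq_gt0)) -sqrtr_sqr.
rewrite ler_sqrt ?mulr_ge0 ?dot_ge0 // /dot.
have := sqr_ge0 (p ord0 ord0 * q ord0 ord_max - p ord0 ord_max * q ord0 ord0).
by rewrite !expr2; nra.
Qed.

Lemma cvg_addr_mul0 (A B : R) (g : R -> R) :
  g t @[t --> 0] --> B -> (A + t * g t) @[t --> 0] --> A.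
Proof.
move=> gB; rewrite -[X in _ --> X]addr0 -[X in _ --> _ + X](mul0r B).
exact: cvgD (cvg_cst A) (cvgM cvg_id gB).
Qed.

Lemma enorm_ray_cvg v d : enorm (v + t *: d) @[t --> 0] --> enorm v.
Proof.
have E t : enorm (v + t *: d) =
    Num.sqrt (dot v v + t * (2 * dot v d + t * dot d d)).
  by rewrite enormE; congr Num.sqrt; rewrite /dot !mxE; ring.
under eq_cvg do rewrite E.
rewrite enormE; apply: (cvg_comp _ Num.sqrt); last exact: sqrt_continuous.
by apply: cvg_addr_mul0; apply: cvg_addr_mul0; exact: cvg_cst.
Qed.

End EuclideanPlane.

Section PowerGradient.
Context {R : realType}.
Implicit Types (p q v d : 'rV[R]_2) (a b c : R).

(* [b * pgrad b p] is the gradient of [p |-> |p|^b] when [b > 1]. *)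
Definition pgrad b p := enorm p `^ (b - 2) *: p.

Lemma pgrad2 p : pgrad 2 p = p.
Proof. by rewrite /pgrad subrr powRr0 scale1r. Qed.

Lemma powRB2_mulr a b : 1 < b -> 0 <= a -> a `^ (b - 2) * a = a `^ (b - 1).
Proof.
move=> b1 a0; rewrite mulrC -[b - 2]/(b - (1 + 1)) opprD addrA.
by rewrite mulr_powRB1 // subr_gt0.
Qed.

Lemma enorm_pgrad b p : 1 < b -> enorm (pgrad b p) = enorm p `^ (b - 1).
Proof.
by move=> b1; rewrite /pgrad enormZ ger0_norm ?powR_ge0 // powRB2_mulr ?enorm_ge0.
Qed.

(* Young's inequality [a^(b-1) c <= a^b / p + c^b / b] with [1/p + 1/b = 1]. *)
Lemma powR_tangent a b c : 1 < b -> 0 <= a -> 0 <= c ->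
  a `^ b + b * a `^ (b - 1) * (c - a) <= c `^ b.
Proof.
move=> b1 a0 c0.
have b0 : 0 < b by apply: lt_trans b1.
have b1_gt0 : 0 < b - 1 by rewrite subr_gt0.
pose p := b / (b - 1).
have p0 : 0 < p by rewrite divr_gt0.
have pb : p^-1 + b^-1 = 1.
  by rewrite /p invf_div mulrBl mulfV ?gt_eqF // mul1r subrK.
have := conjugate_powR (powR_ge0 a (b - 1)) c0 p0 b0 pb.
rewrite -powRrM [(b - 1) * p]mulrC divfK ?gt_eqF // => young.
have -> : b * a `^ (b - 1) * (c - a) = b * (a `^ (b - 1) * c) - b * a `^ b.
  by rewrite -(mulr_powRB1 a0 b0); ring.
have : b * (a `^ (b - 1) * c) <= b * (a `^ b / p + c `^ b / b).
  by rewrite ler_pM2l.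
have -> : b * (a `^ b / p + c `^ b / b) = (b - 1) * a `^ b + c `^ b.
  by rewrite /p; field; rewrite !gt_eqF.
lra.
Qed.

Lemma ler_powR2r (r : R) :
  0 < r -> {in Num.nneg &, {mono (@powR R) ^~ r : u w / u <= w}}.
Proof. by move=> r0; apply: le_mono_in; exact: gt0_ltr_powR. Qed.

Lemma enorm_powR_tangent b p q : 1 < b ->
  enorm p `^ b + b * dot (pgrad b p) (q - p) <= enorm q `^ b.
Proof.
move=> b1; have b0 : 0 < b by apply: lt_trans b1.
have := powR_tangent _ _ _ b1 (enorm_ge0 p) (enorm_ge0 q).
suff : dot (pgrad b p) (q - p) <= enorm p `^ (b - 1) * (enorm q - enorm p).
  by rewrite -(ler_pM2l b0); lra.
rewrite /pgrad dotZl dotBr -sqr_enorm -powRB2_mulr ?enorm_ge0 // -mulrA.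
rewrite ler_wpM2l ?powR_ge0 //.
by have := dot_le_enorm p q; rewrite expr2; lra.
Qed.

Lemma powR_continuous a z : 0 < z -> {for z, continuous (fun y : R => y `^ a)}.
Proof.
move=> z0; apply: differentiable_continuous; apply/derivable1_diffP.
have D := is_derive1_powR a z0; exact: ex_derive.
Qed.

Lemma pgrad_ray_cvg b v d : 1 < b ->
  dot (pgrad b (v + t *: d)) d @[t --> 0^'+] --> dot (pgrad b v) d.
Proof.
move=> b1.
have E t : dot (pgrad b (v + t *: d)) d =
    enorm (v + t *: d) `^ (b - 2) * (dot v d + t * dot d d).
  by rewrite /pgrad dotZl dotDl dotZl.
have [v0|v0] := eqVneq v 0.
  subst v; have -> : dot (pgrad b 0) d = 0 by rewrite /pgrad scaler0 dot0l.
  apply: (@cvg_trans _ ((t `^ (b - 1) * enorm d `^ b) @[t --> 0^'+])).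
    apply: near_eq_cvg; near=> t.
    have t0 : 0 < t by near: t; exact: nbhs_right_gt.
    rewrite E add0r dot0l add0r enormZ gtr0_norm // -sqr_enorm.
    rewrite powRM ?enorm_ge0 ?ltW // mulrACA mulrC powRB2_mulr ?ltW //.
    rewrite -(powR_mulrn _ (enorm_ge0 d)) -powRD ?subrK 1?mulrC //.
    by rewrite gt_eqF // (lt_trans ltr01 b1).
  have b1_gt0 : 0 < b - 1 by rewrite subr_gt0.
  have := cvgMr_tmp (b := enorm d `^ b) (powR_cvg0 b1_gt0); rewrite mul0r; apply.
under eq_cvg do rewrite E.
apply: cvg_at_right_filter; rewrite /pgrad dotZl.
apply: cvgM; last by apply: cvg_addr_mul0; exact: cvg_cst.
apply: (cvg_comp (fun t => enorm (v + t *: d)) (fun y => y `^ (b - 2))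
  (enorm_ray_cvg v d)).
apply: powR_continuous.
by rewrite lt_neqAle enorm_ge0 andbT eq_sym; apply: contra_neq v0; exact: enorm_eq0.
Unshelve. all: end_near.
Qed.

End PowerGradient.

Lemma bigmax_eq_maximum {R : realType} {J : finType} (F : J -> R) j :
  (forall k, F k <= F j) -> 0 <= F j -> \big[Num.max/0]_k F k = F j.
Proof.
move=> Fj_max Fj_ge0; apply/le_anti; rewrite le_bigmax andbT.
by apply: bigmax_le => // k _; exact: Fj_max.
Qed.

Lemma near_lt_bigmax {R : realType} {J : finType} (h : J -> R)
    (psi : J -> R -> R) (c : J -> R) :
  (forall k, psi k t @[t --> 0^'+] --> c k) ->
  (forall k, (forall l, h l <= h k) -> c k < 0) ->
  \forall t \near 0^'+, forall k, h k + t * psi k t < \big[Num.max/0]_l h l.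
Proof.
move=> psi_cvg c_lt0; apply: filter_forall => k.
have [hk_lt|hk_ge] := ltP (h k) (\big[Num.max/0]_l h l).
  have lim : h k + t * psi k t @[t --> 0^'+] --> h k + 0 * c k.
    apply: cvgD; first exact: cvg_cst.
    apply: cvgM; last exact: psi_cvg.
    by apply: cvg_at_right_filter; exact: cvg_id.
  rewrite mul0r addr0 in lim; exact: cvgr_lt _ lim _ hk_lt.
have ck_lt0 : c k < 0.
  by apply: c_lt0 => l; apply: le_trans hk_ge; exact: le_bigmax.
near=> t.
have t0 : 0 < t by near: t; exact: nbhs_right_gt.
have : psi k t < 0 by near: t; exact: cvgr_lt (psi_cvg k) _ ck_lt0.
have hk_le : h k <= \big[Num.max/0]_l h l by exact: le_bigmax.
by rewrite -(pmulr_rlt0 _ t0); lra.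
Unshelve. all: end_near.
Qed.

Section Stationary.
Context {R : realType} {J : finType}.
Variables (b : R) (y : J -> 'rV[R]_2).

(* [b] times the left-hand side is the one-sided derivative of [Pbeta b _ y]
   at [s] in direction [d], taking [j] to realise the derivative of the max. *)
Definition Pbeta_stationary s := forall d, exists j,
  (forall k, enorm (s - y k) `^ b <= enorm (s - y j) `^ b) /\
  0 <= \sum_k dot (pgrad b (s - y k)) d + dot (pgrad b (s - y j)) d.

Hypothesis b1 : 1 < b.

Lemma stationary_Pbeta_min s :
  Pbeta_stationary s -> forall s', Pbeta b s y <= Pbeta b s' y.
Proof.
move=> stat s'; have b0 : 0 < b by apply: lt_trans b1.
have [j [j_max j_ge0]] := stat (s' - s).
have tangent k : enorm (s - y k) `^ b + b * dot (pgrad b (s - y k)) (s' - s)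
    <= enorm (s' - y k) `^ b.
  have := enorm_powR_tangent _ (s - y k) (s' - y k) b1.
  by rewrite opprB addrA subrK.
have sum_le : \sum_k enorm (s - y k) `^ b +
    b * \sum_k dot (pgrad b (s - y k)) (s' - s) <= \sum_k enorm (s' - y k) `^ b.
  by rewrite mulr_sumr -big_split /=; apply: ler_sum => k _; exact: tangent.
have max_ge : enorm (s' - y j) `^ b <= \big[Num.max/0]_k enorm (s' - y k) `^ b.
  exact: le_bigmax.
rewrite /Pbeta (bigmax_eq_maximum _ _ j_max (powR_ge0 _ _)).
have := tangent j; rewrite -(pmulr_rge0 _ b0) mulrDr in j_ge0; lra.
Qed.

Lemma Pbeta_min_stationary s : (0 < #|J|)%N ->
  (forall s', Pbeta b s y <= Pbeta b s' y) -> Pbeta_stationary s.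
Proof.
move=> /card_gt0P [j0 _] s_min d; apply: contrapT => not_stat.
have b0 : 0 < b by apply: lt_trans b1.
pose h k := enorm (s - y k) `^ b.
pose phi k t := dot (pgrad b (s - y k + t *: d)) d.
pose M := \big[Num.max/0]_k h k.
have phi_cvg k : phi k t @[t --> 0^'+] --> dot (pgrad b (s - y k)) d.
  exact: pgrad_ray_cvg.
have : \forall t \near 0^'+, 0 < t /\
    forall k, h k + t * (b * (phi k t + \sum_l phi l t)) < M.
  near=> t; split; first by near: t; exact: nbhs_right_gt.
  near: t; apply: (near_lt_bigmax h (fun k t => b * (phi k t + \sum_l phi l t))
    (fun k => b * (dot (pgrad b (s - y k)) d + \sum_l dot (pgrad b (s - y l)) d)))
    => k.
    apply: cvgM; first exact: cvg_cst.
    apply: cvgD; first exact: phi_cvg.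
    apply: cvg_big; last by move=> l _; exact: phi_cvg.
    exact: add_continuous.
  move=> k_max; rewrite pmulr_rlt0 // ltNge; apply/negP => k_ge0.
  by apply: not_stat; exists k; split; rewrite // addrC.
move=> /filter_ex [t [t0 descent]].
pose e k := enorm (s + t *: d - y k) `^ b.
have e_le k : e k <= h k + t * b * phi k t.
  have := enorm_powR_tangent _ (s - y k + t *: d) (s - y k) b1.
  rewrite (_ : s - y k - (s - y k + t *: d) = - (t *: d)); last first.
    by rewrite opprD addrA subrr add0r.
  by rewrite dotNr dotZr /e /h /phi addrAC; lra.
have sum_e : \sum_k e k <= \sum_k h k + t * b * \sum_k phi k t.
  by rewrite mulr_sumr -big_split /=; apply: ler_sum => k _; exact: e_le.
have max_e : \big[Num.max/0]_k e k < M - t * b * \sum_k phi k t.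
  have e_lt k : e k < M - t * b * \sum_l phi l t.
    by have := e_le k; have := descent k; lra.
  apply: bigmax_lt => [|k _]; last exact: e_lt.
  by have := e_lt j0; have : 0 <= e j0 := powR_ge0 _ _; lra.
have := s_min (s + t *: d).
change (\sum_k h k + M <= \sum_k e k + \big[Num.max/0]_k e k -> False).
lra.
Unshelve. all: end_near.
Qed.

End Stationary.

Section TransformedFamily.
Context {R : realType} {J : finType}.
Variables (a : R) (x : J -> 'rV[R]_2).
Hypothesis a1 : 1 < a.

Lemma subr_Xs s k : s - Xs a x s k = pgrad a (s - x k).
Proof.
rewrite /Xs; case: ifP => [/eqP <-|_]; first by rewrite subrr /pgrad scaler0.
by rewrite opprD addrA subrr add0r -scalerN opprB.
Qed.

Lemma enorm_subr_Xs_ler s k l :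
  (enorm (s - Xs a x s k) `^ 2 <= enorm (s - Xs a x s l) `^ 2) =
  (enorm (s - x k) `^ a <= enorm (s - x l) `^ a).
Proof.
have a0 : 0 < a by apply: lt_trans a1.
have a1_gt0 : 0 < a - 1 by rewrite subr_gt0.
rewrite !subr_Xs !enorm_pgrad // !ler_powR2r ?nnegrE ?powR_ge0 ?enorm_ge0 //.
Qed.

Lemma Pbeta_stationary_Xs s :
  Pbeta_stationary a x s <-> Pbeta_stationary 2 (Xs a x s) s.
Proof.
have grad_Xs k d : dot (pgrad 2 (s - Xs a x s k)) d = dot (pgrad a (s - x k)) d.
  by rewrite pgrad2 subr_Xs.
split=> stat d; have [j [j_max j_ge0]] := stat d; exists j; split.
- by move=> k; rewrite enorm_subr_Xs_ler.
- by rewrite grad_Xs; under eq_bigr do rewrite grad_Xs.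
- by move=> k; rewrite -enorm_subr_Xs_ler.
- by move: j_ge0; rewrite grad_Xs; under eq_bigr do rewrite grad_Xs.
Qed.

End TransformedFamily.

Lemma Pbeta_unique_min_card_gt0 {R : realType} {J : finType} (b : R)
    (y : J -> 'rV[R]_2) s0 :
  (forall t, (forall s, Pbeta b t y <= Pbeta b s y) -> t = s0) -> (0 < #|J|)%N.
Proof.
move=> uniq_min; rewrite lt0n; apply/negP => /eqP/card0_eq J0.
have P0 s : Pbeta b s y = 0.
  by rewrite /Pbeta !big_pred0 ?addr0 // => j; have := J0 j; rewrite !inE.
have all_min s : forall s', Pbeta b s y <= Pbeta b s' y by move=> s'; rewrite !P0.
have e1 := uniq_min _ (all_min (const_mx 1)); have e0 := uniq_min _ (all_min 0).
have /rowP/(_ ord0) : const_mx 1 = 0 :> 'rV[R]_2 by rewrite e1 e0.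
by rewrite !mxE => /eqP; rewrite oner_eq0.
Qed.

Theorem lemma10 (R : realType) (J : finType) (alpha : R)
    (x : J -> 'rV[R]_2) (sstar s' : 'rV[R]_2) :
  1 < alpha ->
  (* sstar is the unique minimiser s_alpha^* of P_alpha(., X) *)
  (forall s, Pbeta alpha sstar x <= Pbeta alpha s x) ->
  (forall t, (forall s, Pbeta alpha t x <= Pbeta alpha s x) -> t = sstar) ->
  ((forall s, Pbeta 2 s' (Xs alpha x s') <= Pbeta 2 s (Xs alpha x s'))
   <-> s' = sstar).
Proof.
move=> a1 sstar_min sstar_uniq.
have J_gt0 := Pbeta_unique_min_card_gt0 _ _ _ sstar_uniq.
have two_gt1 : (1 : R) < 2 by rewrite ltr1n.
split=> [s'_min | ->].
- apply: sstar_uniq; apply: (stationary_Pbeta_min _ _ a1).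
  apply/(Pbeta_stationary_Xs _ _ a1).
  exact: (Pbeta_min_stationary _ _ two_gt1 _ J_gt0 s'_min).
- apply: (stationary_Pbeta_min _ _ two_gt1); apply/(Pbeta_stationary_Xs _ _ a1).
  exact: (Pbeta_min_stationary _ _ a1 _ J_gt0 sstar_min).
Qed.
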